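(* Consider the random intersection graph $G(n,m,F)$ defined in the context, with $m=\lfloor\beta n^\alpha\rfloor$ and $p_i=\gamma W_i n^{-(1+\alpha)/2}\wedge 1$, and assume $F$ has finite mean (normalized to $1$). Let $D_i$ be the degree of vertex $i$. Then for every $\alpha>0$, $\mathbf{E}[D_i\mid W_i]\to\beta\gamma^2W_i$ as $n\to\infty$ (i.e. for every fixed value $w>0$ of $W_i$, with the other weights i.i.d. with distribution $F$, the expected degree of $i$ converges to $\beta\gamma^2 w$).
   Context: Model $G(n,m,F)$: fix constants $\alpha,\beta,\gamma>0$ and a probability distribution $F$ on $(0,\infty)$; if $F$ has finite mean it is assumed to have mean $1$. For a positive integer $n$ let $m=\lfloor\beta n^\alpha\rfloor$, let $\mathcal V=\{1,\dots,n\}$ (vertices, ''individuals'') and $\mathcal A$ a set of $m$ elements (''groups''). Let $W_1,\dots,W_n$ be i.i.d. with distribution $F$ and set $p_i=\gamma W_i n^{-(1+\alpha)/2}\wedge 1$. Conditionally on the weights, form a bipartite graph $B(n,m,F)$ on $\mathcal V\cup\mathcal A$ by including each edge between $i\in\mathcal V$ and $a\in\mathcal A$ independently with probability $p_i$. The graph $G(n,m,F)$ on $\mathcal V$ has an edge between distinct $i,j$ iff some $a\in\mathcal A$ is adjacent to both $i$ and $j$ in $B(n,m,F)$. The parameters $\alpha,\beta,\gamma,F$ do not depend on $n$. *)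

From HB Require Import structures.
From mathcomp Require Import all_boot all_order all_algebra.
From mathcomp Require Import all_classical all_reals all_analysis.
Set Implicit Arguments. Unset Strict Implicit. Unset Printing Implicit Defensive.
Import Order.TTheory GRing.Theory Num.Theory.
Local Open Scope classical_set_scope.
Local Open Scope ring_scope.

Section RIG.
Variable R : realType.

Definition ngroups (alpha beta : R) (n : nat) : nat :=
  Num.truncn (beta * (n%:R `^ alpha)).

Definition edgeprob (alpha gamma : R) (n : nat) (w : R) : R :=
  Order.min (gamma * w * (n%:R `^ (- ((1 + alpha) / 2)))) 1.

(* degree of vertex i (given as a nat) in the intersection graph G induced by
   the bipartite graph B on 'I_n x 'I_m *)
Definition igdegree (n m : nat) (B : {ffun 'I_n * 'I_m -> bool}) (i : nat) : nat :=
  #|[set j : 'I_n | (val j != i) &&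
      [exists a : 'I_m, B (j, a) && [exists k : 'I_n, (val k == i) && B (k, a)]]]|.

Definition bipprob (alpha gamma : R) (n m : nat) (wt : nat -> R)
    (B : {ffun 'I_n * 'I_m -> bool}) : R :=
  \prod_(k : 'I_n * 'I_m)
     (if B k then edgeprob alpha gamma n (wt (val k.1))
      else 1 - edgeprob alpha gamma n (wt (val k.1))).

(* E[D_i | W_1..W_n = wt] in G(n,m,F) with m = floor(beta n^alpha) *)
Definition cond_degree (alpha beta gamma : R) (n : nat) (wt : nat -> R) (i : nat) : R :=
  let m := ngroups alpha beta n in
  \sum_(B : {ffun 'I_n * 'I_m -> bool})
     bipprob alpha gamma wt B * (igdegree B i)%:R.

(* W is a sequence of i.i.d. random variables with distribution F
   (mutual independence: product rule over every finite subfamily) *)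
Definition iid_law d (T : measurableType d) (P : probability T R)
    (F : probability R R) (W : nat -> T -> R) : Prop :=
  [/\ (forall j, measurable_fun setT (W j)),
      (forall j (A : set R), measurable A -> P (W j @^-1` A) = F A) &
      (forall (J : seq nat) (A : nat -> set R), uniq J ->
          (forall j, measurable (A j)) ->
          P (\bigcap_(j in [set j | j \in J]) (W j @^-1` A j)) =
          (\prod_(j <- J) fine (P (W j @^-1` A j)))%:E)].

End RIG.

(* Conditionally on the weights, a vertex j <> i is adjacent to i iff the two
   share one of the m groups; group memberships being independent, this has
   probability 1 - (1 - p_i p_j)^m, so E[D_i | W] = sum_(j <> i) (1 - (1 - p_i p_j)^m).
   Eventually p_i p_j = gamma^2 w W_j n^-(1+alpha) and m ~ beta n^alpha, so the
   Bernoulli bounds m y - (m y)^2 <= 1 - (1 - y)^m <= m y show that (n - 1) times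
   a summand converges to beta gamma^2 w W_j and is dominated by it.  As the
   summands are identically distributed, dominated convergence and E[W_j] = 1
   give the limit beta gamma^2 w. *)

From HB Require Import structures.
From mathcomp Require Import all_boot all_order all_algebra.
From mathcomp Require Import all_classical all_reals all_analysis.
From mathcomp Require Import measurable_realfun ring lra.
Import Order.TTheory GRing.Theory Num.Theory.
Import numFieldNormedType.Exports.
Local Open Scope classical_set_scope.
Local Open Scope ring_scope.
Set Implicit Arguments. Unset Strict Implicit.

Section BernoulliProduct.
Variables (R : comNzRingType) (I : finType) (p : I -> R).

Definition bern_weight (B : {ffun I -> bool}) : R :=
  \prod_k (if B k then p k else 1 - p k).

Lemma sum_bern_weight_prod (h : I -> bool -> R) :
  \sum_(B : {ffun I -> bool}) bern_weight B * \prod_k h k (B k) =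
  \prod_k (p k * h k true + (1 - p k) * h k false).
Proof.
transitivity (\prod_k \sum_(b : bool) (if b then p k else 1 - p k) * h k b).
  by rewrite bigA_distr_bigA; apply: eq_bigr => B _; rewrite -big_split.
by apply: eq_bigr => k _; rewrite big_bool.
Qed.

Lemma sum_bern_weight : \sum_(B : {ffun I -> bool}) bern_weight B = 1.
Proof.
transitivity (\sum_(B : {ffun I -> bool}) bern_weight B * \prod_(k : I) (1 : R)).
  by apply: eq_bigr => B _; rewrite big1_eq mulr1.
rewrite (sum_bern_weight_prod (fun _ _ => 1)).
by apply: big1 => k _; rewrite !mulr1 addrC subrK.
Qed.

End BernoulliProduct.

Section SharedGroup.
Variable R : comNzRingType.

Lemma prod_if_two (V : finType) (j k : V) (F G : V -> R) : j != k ->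
  \prod_x (if x == j then F x else if x == k then G x else 1) = F j * G k.
Proof.
move=> jk; rewrite (bigD1 j) //= eqxx (bigD1 k) 1?eq_sym //= eqxx (negbTE jk).
by rewrite big1 ?mulr1 // => x /andP[/negbTE-> /negbTE->].
Qed.

Lemma natr_existsE (A : finType) (b : pred A) :
  [exists a, b a]%:R = 1 - \prod_a (1 - (b a)%:R) :> R.
Proof.
case: existsP => [[a ba]|nb]; first by rewrite (bigD1 a) //= ba subrr mul0r subr0.
rewrite big1 ?subrr // => a _.
have /negbTE-> : ~~ b a by apply/negP => ba; apply: nb; exists a.
by rewrite subr0.
Qed.

Lemma prod1B_expand (A : finType) (y : A -> R) :
  \prod_a (1 - y a) = \sum_(g : {ffun A -> bool}) \prod_a (if g a then - y a else 1).
Proof.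
rewrite -(bigA_distr_bigA (fun a (b : bool) => if b then - y a else 1)).
by apply: eq_bigr => a _; rewrite big_bool addrC.
Qed.

Lemma sum_bern_weight_share (V A : finType) (p : V -> R) (j k : V) : j != k ->
  \sum_(B : {ffun V * A -> bool}) bern_weight (fun e => p e.1) B *
    [exists a, B (j, a) && B (k, a)]%:R = 1 - (1 - p j * p k) ^+ #|A|.
Proof.
(* Expanding \prod_a (1 - [B (j, a) && B (k, a)]) over the sets g of groups
   turns each term into a product of functions of single edges, whose mean
   factorizes; the sign of the term is carried by the edges of j. *)
move=> jk.
pose h (g : {ffun A -> bool}) (e : V * A) (b : bool) : R :=
  if g e.2 then (if e.1 == j then - b%:R else if e.1 == k then b%:R else 1) else 1.
have prod_pair (f : V * A -> R) : \prod_e f e = \prod_a \prod_x f (x, a).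
  by rewrite exchange_big pair_big; apply: eq_bigr => -[].
have sign (g : {ffun A -> bool}) (B : {ffun V * A -> bool}) :
    \prod_a (if g a then - (B (j, a) && B (k, a))%:R else 1) = \prod_e h g e (B e).
  rewrite prod_pair; apply: eq_bigr => a _; rewrite /h /=.
  case: (g a); last by rewrite big1_eq.
  by rewrite prod_if_two // mulNr -natrM mulnb.
have mean (g : {ffun A -> bool}) : \prod_e (p e.1 * h g e true + (1 - p e.1) * h g e false) =
    \prod_a (if g a then - (p j * p k) else 1).
  rewrite prod_pair; apply: eq_bigr => a _; rewrite /h /=.
  case: (g a); last by apply: big1 => x _; rewrite !mulr1 addrC subrK.
  rewrite -mulNr -(prod_if_two (fun x => - p x) p jk); apply: eq_bigr => x _.
  by case: eqP => _; [|case: eqP => _];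
    rewrite ?mulrN ?mulr0 ?subr0 ?addr0 ?mulr1 // addrC subrK.
under eq_bigr do rewrite natr_existsE prod1B_expand mulrBr mulr1 big_distrr /=.
rewrite sumrB sum_bern_weight exchange_big /=; congr (_ - _).
rewrite -prodr_const prod1B_expand; apply: eq_bigr => g _.
by under eq_bigr do rewrite sign; rewrite sum_bern_weight_prod mean.
Qed.

End SharedGroup.

Lemma in_set_predE (T : Type) (b : pred T) x : (x \in [set y | b y]%classic) = b x.
Proof. exact: asboolb. Qed.

Lemma igdegreeE n m (B : {ffun 'I_n * 'I_m -> bool}) (k : 'I_n) :
  igdegree B k = (\sum_(j | j != k) [exists a, B (j, a) && B (k, a)])%N.
Proof.
rewrite /igdegree -sum1_card big_mkcond [RHS]big_mkcond; apply: eq_bigr => j _.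
rewrite in_set_predE (inj_eq val_inj); case: (j != k) => //=.
congr nat_of_bool; apply: eq_existsb => a; congr (_ && _).
by apply/existsP/idP => [[k' /andP[/eqP/val_inj-> //]] | Bka]; exists k; rewrite eqxx.
Qed.

Lemma cond_degreeE (R : realType) alpha beta gamma n (wt : nat -> R) i : (i < n)%N ->
  cond_degree alpha beta gamma n wt i =
  \sum_(j < n | val j != i) (1 - (1 - edgeprob alpha gamma n (wt j) *
                             edgeprob alpha gamma n (wt i)) ^+ ngroups alpha beta n).
Proof.
move=> lt_in; pose k := Ordinal lt_in.
rewrite /cond_degree; set m := ngroups _ _ _.
under eq_bigr do rewrite (igdegreeE _ k) natr_sum big_distrr /=.
rewrite exchange_big /=; apply: eq_big => [// | j ne_jk].
have := @sum_bern_weight_share _ _ 'I_m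
  (fun x : 'I_n => edgeprob alpha gamma n (wt x)) _ _ ne_jk.
by rewrite card_ord => <-.
Qed.

Section Bernoulli.
Variable R : realFieldType.

Lemma one_sub_expr_le (y : R) m : 0 <= y <= 1 -> 1 - (1 - y) ^+ m <= m%:R * y.
Proof.
move=> /andP[y_ge0 y_le1]; suff : 1 - m%:R * y <= (1 - y) ^+ m by lra.
elim: m => [|m IH]; first by rewrite mul0r subr0 expr0.
have y1_ge0 : 0 <= 1 - y by rewrite subr_ge0.
rewrite exprS -natr1; apply: le_trans (ler_wpM2l y1_ge0 IH).
have : 0 <= m%:R :> R by []; nra.
Qed.

Lemma one_sub_expr_ge (y : R) m : 0 <= y <= 1 ->
  m%:R * y - (m%:R * y) ^+ 2 <= 1 - (1 - y) ^+ m.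
Proof.
move=> /andP[y_ge0 y_le1].
suff : (1 - y) ^+ m <= 1 - m%:R * y + (m%:R * y) ^+ 2 by lra.
elim: m => [|m IH]; first by rewrite mul0r subr0 expr0n addr0.
have y1_ge0 : 0 <= 1 - y by rewrite subr_ge0.
rewrite exprS -natr1; apply: le_trans (ler_wpM2l y1_ge0 IH) _.
have m_ge0 : 0 <= m%:R :> R by [].
have : 0 <= m%:R * m%:R * y * y * y by rewrite !mulr_ge0.
rewrite !expr2; nra.
Qed.

End Bernoulli.

Section PowerSequences.
Variable R : realType.

Lemma powRn_cvg0 (a : R) : 0 < a -> (fun n : nat => n%:R `^ (- a)) @ \oo --> 0.
Proof.
move=> a_gt0; rewrite -cvg_shiftS.
have := (cvg_at_rightP (fun x : R => x `^ a) 0 0).1 (powR_cvg0 a_gt0) harmonic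
  (conj (@harmonic_gt0 R) cvg_harmonic).
by apply: cvg_trans; apply: near_eq_cvg; apply: nearW => n /=;
  rewrite -powR_inv1 // -powRrM mulN1r.
Qed.

Lemma invn_cvg0 : (fun n : nat => n%:R^-1 : R) @ \oo --> 0.
Proof.
by apply/gtr0_cvgV0; [near=> n; rewrite ltr0n; near: n; exact: nbhs_infty_gt | exact: cvgr_idn].
Unshelve. all: by end_near. Qed.

Lemma predn_div_cvg1 : (fun n : nat => (n.-1)%:R / n%:R : R) @ \oo --> (1 : R).
Proof.
rewrite -[X in _ --> X]subr0; apply: cvg_trans (cvgB (cvg_cst (1 : R)) invn_cvg0).
apply: near_eq_cvg; near=> n.
have n_gt0 : (0 < n)%N by near: n; exact: nbhs_infty_gt.
by rewrite -(prednK n_gt0) !fctE /= -natr1; field; rewrite natr1 pnatr_eq0.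
Unshelve. all: by end_near. Qed.

End PowerSequences.

Section EdgeProbability.
Variables (R : realType) (alpha beta gamma w : R).
Hypotheses (alpha_gt0 : 0 < alpha) (beta_gt0 : 0 < beta) (gamma_gt0 : 0 < gamma).
Hypothesis w_gt0 : 0 < w.

Local Notation c n := (n%:R `^ (- ((1 + alpha) / 2)) : R).
Local Notation m n := (ngroups alpha beta n).
Local Notation p := (edgeprob alpha gamma).

Lemma edgeprob_le n x : p n x <= gamma * x * c n.
Proof. by rewrite /edgeprob ge_min lexx. Qed.

Lemma edgeprob_itv n x : 0 <= x -> 0 <= p n x <= 1.
Proof.
move=> x_ge0; rewrite /edgeprob le_min ge_min lexx orbT andbT /=.
by rewrite !mulr_ge0 ?powR_ge0 // ltW.
Qed.

Lemma edgeprob_near x : 0 < x -> \forall n \near \oo, p n x = gamma * x * c n.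
Proof.
move=> x_gt0; have gx_gt0 : 0 < gamma * x by rewrite mulr_gt0.
have gxV_gt0 : 0 < (gamma * x)^-1 by rewrite invr_gt0.
have c_cvg0 : (fun n : nat => c n) @ \oo --> 0.
  by apply: powRn_cvg0; rewrite divr_gt0 // addr_gt0.
near=> n; apply/min_idPl.
have c_lt : c n < (gamma * x)^-1.
  by near: n; exact: cvgr_lt c_cvg0 _ gxV_gt0.
by rewrite -ler_pdivlMl // mulr1 ltW.
Unshelve. all: by end_near. Qed.

Lemma natr_mul_edge_scale_sqr n : (0 < n)%N -> n%:R * c n ^+ 2 = n%:R `^ (- alpha).
Proof.
move=> n_gt0; have n_neq0 : n%:R != 0 :> R by rewrite pnatr_eq0 -lt0n.
rewrite expr2 -{1}(powRr1 (ler0n _ n)) -!powRD ?n_neq0 ?implybT //.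
by congr (_ `^ _); lra.
Qed.

Lemma ngroups_le n : (m n)%:R <= beta * n%:R `^ alpha.
Proof. by rewrite /ngroups truncn_le mulr_ge0 ?powR_ge0 // ltW. Qed.

Lemma ngroups_gt n : beta * n%:R `^ alpha - 1 < (m n)%:R.
Proof.
have /andP[_] := truncn_itv (mulr_ge0 (ltW beta_gt0) (powR_ge0 n%:R alpha)).
by rewrite /ngroups ltrBlDr natr1.
Qed.

Lemma ngroups_scale n : (0 < n)%N ->
  n%:R * (m n)%:R * c n ^+ 2 = (m n)%:R * n%:R `^ (- alpha).
Proof. by move=> n_gt0; rewrite mulrAC natr_mul_edge_scale_sqr // mulrC. Qed.

Lemma ngroups_scale_le n : n%:R * (m n)%:R * c n ^+ 2 <= beta.
Proof.
case: n => [|n]; first by rewrite !mul0r ltW.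
rewrite ngroups_scale // -[leRHS]mulr1.
rewrite -[X in _ <= _ * X](@mulfV _ (n.+1%:R `^ alpha)) ?gt_eqF ?powR_gt0 //.
by rewrite -powRN mulrA ler_wpM2r ?powR_ge0 ?ngroups_le.
Qed.

Lemma ngroups_scale_cvg : (fun n => n%:R * (m n)%:R * c n ^+ 2) @ \oo --> beta.
Proof.
have d_cvg0 : (fun n : nat => n%:R `^ (- alpha)) @ \oo --> (0 : R) := powRn_cvg0 alpha_gt0.
apply: (@squeeze_cvgr _ _ _ _ (fun n => beta - n%:R `^ (- alpha)) (cst beta)); last 2 first.
- by rewrite -[X in _ --> X]subr0; exact: cvgB (cvg_cst _) d_cvg0.
- exact: cvg_cst.
near=> n; have n_gt0 : (0 < n)%N by near: n; exact: nbhs_infty_gt.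
rewrite ngroups_scale_le andbT ngroups_scale //.
have nd : n%:R `^ alpha * n%:R `^ (- alpha) = 1 :> R.
  by rewrite powRN mulfV // gt_eqF // powR_gt0 // ltr0n.
have := ler_wpM2r (powR_ge0 n%:R (- alpha)) (ltW (ngroups_gt n)).
by rewrite mulrBl -mulrA nd mulr1 mul1r.
Unshelve. all: by end_near. Qed.

Definition share_prob n x : R := 1 - (1 - p n x * p n w) ^+ m n.

Lemma share_weight_itv n x : 0 <= x -> 0 <= p n x * p n w <= 1.
Proof.
move=> x_ge0; have /andP[px_ge0 px_le1] := edgeprob_itv n x_ge0.
have /andP[pw_ge0 pw_le1] := edgeprob_itv n (ltW w_gt0).
by rewrite mulr_ge0 //= mulr_ile1.
Qed.

Lemma share_prob_ge0 n x : 0 <= x -> 0 <= share_prob n x.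
Proof.
move=> /(share_weight_itv n)/andP[y_ge0 y_le1].
by rewrite subr_ge0 exprn_ile1 // ?subr_ge0 // lerBlDr lerDl.
Qed.

Lemma share_prob_le n x : 0 <= x -> share_prob n x <= (m n)%:R * (p n x * p n w).
Proof. by move=> /(share_weight_itv n)/(one_sub_expr_le (m n)). Qed.

Lemma share_prob_ge n x : 0 <= x ->
  (m n)%:R * (p n x * p n w) - ((m n)%:R * (p n x * p n w)) ^+ 2 <= share_prob n x.
Proof. by move=> /(share_weight_itv n)/(one_sub_expr_ge (m n)). Qed.

Lemma share_weight_le n x : 0 <= x -> p n x * p n w <= gamma ^+ 2 * w * x * c n ^+ 2.
Proof.
move=> x_ge0; have /andP[px_ge0 _] := edgeprob_itv n x_ge0.
have /andP[pw_ge0 _] := edgeprob_itv n (ltW w_gt0).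
have -> : gamma ^+ 2 * w * x * c n ^+ 2 = gamma * x * c n * (gamma * w * c n) by ring.
exact: ler_pM (edgeprob_le _ _) (edgeprob_le _ _).
Qed.

Lemma share_weight_near x : 0 < x ->
  \forall n \near \oo, p n x * p n w = gamma ^+ 2 * w * x * c n ^+ 2.
Proof.
move=> x_gt0; near=> n.
rewrite (near (edgeprob_near x_gt0) n) //.
rewrite (near (edgeprob_near w_gt0) n) //.
ring.
Unshelve. all: by end_near. Qed.

Lemma share_prob_sum_le n x : 0 <= x -> (n.-1)%:R * share_prob n x <= beta * gamma ^+ 2 * w * x.
Proof.
move=> x_ge0; set C := gamma ^+ 2 * w * x.
have C_ge0 : 0 <= C by rewrite !mulr_ge0 ?exprn_ge0 // ltW.
have pred_le : (n.-1)%:R <= n%:R :> R by rewrite ler_nat leq_pred.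
apply: le_trans (ler_pM (ler0n _ _) (share_prob_ge0 n x_ge0) pred_le (share_prob_le n x_ge0)) _.
apply: le_trans (_ : n%:R * ((m n)%:R * (C * c n ^+ 2)) <= _).
  by rewrite ler_wpM2l // ler_wpM2l // share_weight_le.
have -> : beta * gamma ^+ 2 * w * x = C * beta by rewrite /C; ring.
have -> : n%:R * ((m n)%:R * (C * c n ^+ 2)) = C * (n%:R * (m n)%:R * c n ^+ 2) by ring.
exact: ler_wpM2l (ngroups_scale_le n).
Qed.

Lemma share_prob_sum_cvg x : 0 < x ->
  (fun n => (n.-1)%:R * share_prob n x) @ \oo --> beta * gamma ^+ 2 * w * x.
Proof.
move=> x_gt0; set C := gamma ^+ 2 * w * x.
pose v n := (m n)%:R * (p n x * p n w).
pose u n := (n.-1)%:R * v n.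
have v_near : \forall n \near \oo, v n = n%:R * (m n)%:R * c n ^+ 2 * n%:R^-1 * C.
  near=> n; have n_gt0 : (0 < n)%N by near: n; exact: nbhs_infty_gt.
  rewrite /v (near (share_weight_near x_gt0) n) //.
  by rewrite /C; field; rewrite pnatr_eq0 -lt0n.
have v_cvg : v @ \oo --> 0.
  have -> : 0 = beta * 0 * C by rewrite mulr0 mul0r.
  apply: (@cvg_trans _ ((fun n => n%:R * (m n)%:R * c n ^+ 2 * n%:R^-1 * C) @ \oo)).
    by apply: near_eq_cvg; near=> n; rewrite (near v_near n).
  by apply: cvgM; [apply: cvgM; [exact: ngroups_scale_cvg | exact: invn_cvg0] | exact: cvg_cst].
have u_cvg : u @ \oo --> beta * gamma ^+ 2 * w * x.
  have -> : beta * gamma ^+ 2 * w * x = 1 * beta * C by rewrite /C; ring.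
  apply: (@cvg_trans _ ((fun n => (n.-1)%:R / n%:R * (n%:R * (m n)%:R * c n ^+ 2) * C) @ \oo)).
    by apply: near_eq_cvg; near=> n; rewrite /u (near v_near n) //; ring.
  by apply: cvgM; [apply: cvgM; [exact: predn_div_cvg1 | exact: ngroups_scale_cvg] | exact: cvg_cst].
apply: (@squeeze_cvgr _ _ _ _ (fun n => u n - u n * v n) u); last 2 first.
- by have := cvgB u_cvg (cvgM u_cvg v_cvg); rewrite mulr0 subr0; exact.
- exact: u_cvg.
near=> n; rewrite /u -mulrA -mulrBr; apply/andP; split; apply: ler_wpM2l => //.
  by rewrite -expr2; exact: share_prob_ge (ltW x_gt0).
exact: share_prob_le (ltW x_gt0).
Unshelve. all: by end_near. Qed.

End EdgeProbability.

Lemma sum_ord_neq (R : nzRingType) n i (c : R) : (i < n)%N ->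
  \sum_(j < n | val j != i) c = (n.-1)%:R * c.
Proof.
move=> lt_in; have n_gt0 : (0 < n)%N := leq_ltn_trans (leq0n i) lt_in.
have : \sum_(j < n) c = c + \sum_(j < n | val j != i) c by rewrite (bigD1 (Ordinal lt_in)).
by rewrite sumr_const card_ord -(prednK n_gt0) mulrS mulr_natl => /addrI.
Qed.

Section LawOfRandomVariable.
Context d (T : measurableType d) (R : realType) (P : probability T R) (F : probability R R).

Lemma ge0_integral_law (X : T -> R) : measurable_fun setT X ->
    (forall A, measurable A -> P (X @^-1` A) = F A) ->
  forall f : R -> R, measurable_fun setT f -> (forall x, 0 <= f x) ->
  (\int[P]_t (f (X t))%:E = \int[F]_x (f x)%:E)%E.
Proof.
move=> mX lawX f mf f_ge0.
have := @ge0_integral_pushforward _ _ T R R X mX P setT (fun x => (f x)%:E) measurableT.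
rewrite preimage_setT => <- //.
- by apply: eq_measure_integral => A mA _ /=; rewrite /pushforward lawX.
- exact/measurable_EFinP.
- by move=> x _; rewrite lee_fin.
Qed.

Lemma iid_law_ae_gt0 (W : nat -> T -> R) : iid_law P F W ->
  F [set x | x <= 0] = 0%E -> \forall t \ae P, forall j, 0 < W j t.
Proof.
move=> [mW lawW _] F_le0.
have m_le0 : measurable [set x : R | x <= 0] by rewrite -set_itvNyc; exact: measurable_itv.
have : P.-negligible (\bigcup_j (W j @^-1` [set x | x <= 0])).
  apply: negligible_bigcup => j; exists (W j @^-1` [set x | x <= 0]); split => //.
  - by rewrite -[X in measurable X]setTI; exact: mW.
  - by rewrite -F_le0; exact: lawW.
apply: negligibleS => t /= t_nonpos; apply: contrapT => t_pos; apply: t_nonpos => j.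
by rewrite ltNge; apply/negP => W_le0; apply: t_pos; exists j.
Qed.

End LawOfRandomVariable.

Section ExpectedDegree.
Variables (R : realType) (alpha beta gamma w : R).
Hypotheses (alpha_gt0 : 0 < alpha) (beta_gt0 : 0 < beta) (gamma_gt0 : 0 < gamma).
Hypothesis w_gt0 : 0 < w.

Local Notation s := (share_prob alpha beta gamma w).

(* The clamp at 0 makes the integrand nonnegative; F-a.e. it changes nothing. *)
Definition degree_integrand n (x : R) : R := (n.-1)%:R * s n (Num.max x 0).

Lemma share_prob_measurable n : measurable_fun setT (s n).
Proof.
rewrite /share_prob /edgeprob.
apply: measurable_funB; first exact: measurable_cst.
apply: measurable_funX.
apply: measurable_funB; first exact: measurable_cst.
apply: measurable_funM; last exact: measurable_cst.
apply: measurable_minr; last exact: measurable_cst.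
apply: measurable_funM; last exact: measurable_cst.
by apply: measurable_funM; [exact: measurable_cst | exact: measurable_id].
Qed.

Lemma clamped_share_prob_measurable n : measurable_fun setT (fun x : R => s n (Num.max x 0)).
Proof.
apply: measurableT_comp; first exact: share_prob_measurable.
by apply: measurable_maxr; [exact: measurable_id | exact: measurable_cst].
Qed.

Lemma clamped_share_prob_ge0 n x : 0 <= s n (Num.max x 0).
Proof. by apply: share_prob_ge0; rewrite // le_max lexx orbT. Qed.

Lemma expectation_cond_degree d (T : measurableType d) (P : probability T R)
    (F : probability R R) (W : nat -> T -> R) i n :
  iid_law P F W -> F [set x | x <= 0] = 0%E -> (i < n)%N ->
  ('E_P[fun t => cond_degree alpha beta gamma n
                   (fun j => if j == i then w else W j t) i] =
   \int[F]_x (degree_integrand n x)%:E)%E.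
Proof.
move=> lawW F_le0 lt_in; have [mW lawWj _] := lawW.
pose sc x := s n (Num.max x 0).
have sc_meas := clamped_share_prob_measurable n.
have sum_meas (f : R -> R) : measurable_fun setT f ->
    measurable_fun setT (fun t => \sum_(j < n | val j != i) (f (W j t))%:E).
  move=> mf; under eq_fun do rewrite -big_filter.
  by apply: emeasurable_sum => j; apply/measurable_EFinP; exact: measurableT_comp.
rewrite unlock; transitivity (\int[P]_t (\sum_(j < n | val j != i) (sc (W j t))%:E))%E.
  transitivity (\int[P]_t (\sum_(j < n | val j != i) (s n (W j t))%:E))%E.
    apply: eq_integral => t _; rewrite sumEFin cond_degreeE // eqxx; congr EFin.
    by apply: eq_bigr => j /negbTE ->.
  apply: ae_eq_integral => //; [exact: sum_meas (share_prob_measurable n) | exact: sum_meas sc_meas |].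
  apply: filterS (iid_law_ae_gt0 lawW F_le0) => t W_gt0 _.
  by apply: eq_bigr => j _; rewrite /sc max_l // ltW.
under eq_integral do rewrite -big_filter.
rewrite ge0_integral_sum //; last 2 first.
- by move=> j; apply/measurable_EFinP; apply: measurableT_comp.
- by move=> j t _; rewrite lee_fin clamped_share_prob_ge0.
under eq_bigr do rewrite (ge0_integral_law (mW _) (lawWj _) sc_meas (@clamped_share_prob_ge0 n)).
rewrite -ge0_integral_sum //; last 2 first.
- by move=> _; apply/measurable_EFinP.
- by move=> _ x _; rewrite lee_fin clamped_share_prob_ge0.
by apply: eq_integral => x _; rewrite sumEFin big_filter sum_ord_neq.
Qed.

Lemma degree_integrand_cvg (F : probability R R) :
  F [set x | x <= 0] = 0%E -> F.-integrable setT (fun x => x%:E) -> (\int[F]_x x%:E = 1)%E ->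
  (fun n => \int[F]_x (degree_integrand n x)%:E)%E @ \oo --> (beta * gamma ^+ 2 * w)%:E.
Proof.
move=> F_le0 F_int F_mean; set K := beta * gamma ^+ 2 * w.
have K_ge0 : 0 <= K by rewrite !mulr_ge0 ?exprn_ge0 // ltW.
have F_negl : F.-negligible [set x : R | x <= 0].
  by exists [set x : R | x <= 0]; split => //; rewrite -set_itvNyc; exact: measurable_itv.
have meas_deg n : measurable_fun setT (fun x => (degree_integrand n x)%:E).
  by apply/measurable_EFinP/measurable_funM => //; exact: clamped_share_prob_measurable.
have meas_lim : measurable_fun setT (fun x : R => (K * x)%:E).
  by apply/measurable_EFinP/measurable_funM.
have deg_cvg : {ae F, forall x, setT x ->
    (fun n => (degree_integrand n x)%:E) @ \oo --> (K * x)%:E}.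
  apply: negligibleS F_negl => x /= x_ae; rewrite leNgt; apply/negP => x_gt0.
  apply: x_ae => _; apply: cvg_EFin; first exact: nearW.
  under eq_fun do rewrite /degree_integrand max_l ?ltW //.
  exact: share_prob_sum_cvg.
have dom_int : F.-integrable setT (fun x => (K * `|x|)%:E).
  under eq_fun do rewrite EFinM.
  exact/integrableZl/(integrable_abse F_int).
have deg_dom : {ae F, forall x n, setT x -> (`|(degree_integrand n x)%:E| <= (K * `|x|)%:E)%E}.
  apply: aeW => x n _; rewrite lee_fin ger0_norm ?mulr_ge0 ?clamped_share_prob_ge0 //.
  have max_ge0 : 0 <= Num.max x 0 by rewrite le_max lexx orbT.
  apply: le_trans (share_prob_sum_le alpha beta_gt0 gamma_gt0 w_gt0 n max_ge0) _.
  by rewrite ler_wpM2l // ge_max ler_norm normr_ge0.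
have [_ _] := dominated_convergence measurableT meas_deg meas_lim deg_cvg dom_int deg_dom.
suff -> : (\int[F]_x (K * x)%:E = K%:E)%E by [].
by under eq_integral do rewrite EFinM; rewrite integralZl // F_mean mule1.
Qed.

End ExpectedDegree.

Unset Implicit Arguments.

Theorem proposition1p1 (R : realType) (alpha beta gamma : R)
  (halpha : 0 < alpha) (hbeta : 0 < beta) (hgamma : 0 < gamma)
  (F : probability R R)
  (hFpos : F [set x : R | x <= 0] = 0%E)
  (hFint : F.-integrable setT (fun x : R => x%:E))
  (hFmean : (\int[F]_x x%:E = 1)%E)
  (d : measure_display) (T : measurableType d) (P : probability T R)
  (W : nat -> T -> R) (hW : iid_law P F W)
  (i : nat) (w : R) (hw : 0 < w) :
  (fun n : nat =>
     ('E_P[ fun t => cond_degree alpha beta gamma n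
                      (fun j => if j == i then w else W j t) i ])%E)
    @ \oo --> (beta * gamma ^+ 2 * w)%:E.
Proof.
have := degree_integrand_cvg halpha hbeta hgamma hw hFpos hFint hFmean.
apply: cvg_trans; apply: near_eq_cvg; near=> n.
rewrite (expectation_cond_degree alpha beta hgamma hw hW hFpos) //.
by near: n; exact: nbhs_infty_gt.
Unshelve. all: by end_near. Qed.
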